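(* Let $0<\epsilon<1/2$, $C=\lceil\epsilon^{-1}\rceil$ and $c\in\{0,\dots,C-1\}$. Let $G$ be a graph with edge weights $w(e)\ge1$, and let $G^c$, its levels, the level matchings $M^c_l$, the combined matching $\hat{M}^c$ and the sets $\mathcal{R}^c(e)$ be as defined below. Then for every edge $e\in\hat{M}^c$, $$\Phi^c(e)\le(1+3\epsilon)\,w(e),$$ where $\Phi^c(e)=\sum_{e'\in\mathcal{R}^c(e)}w(e')$.
   Context: An edge $e$ is in bucket $b\in\mathbb{Z}$ if $w(e)\in[\epsilon^{-b},\epsilon^{-(b+1)})$. The graph $G^c$ is obtained from $G$ by removing all edges whose bucket $b$ satisfies $b\equiv c\pmod C$. Level $l$ of copy $c$ consists of the edges of $G^c$ in buckets $lC+c+1,\dots,(l+1)C+c-1$. For each level $l$, $M^c_l$ is a matching consisting of level-$l$ edges of $G^c$. The combined matching $\hat{M}^c$ is formed greedily: start from $\emptyset$; for $l$ from the maximum level down to the minimum, add the (remaining) edges of $M^c_l$, and for each $(u,v)\in M^c_l$ remove all edges incident to $u$ or $v$ from every $M^c_{l'}$ with $l'<l$. For $e=(u,v)\in\hat{M}^c$ on level $l$, $\mathcal{R}^c(e)=\{e\}\cup\{(x,y)\in M^c_{l'}: l'<l,\ \{x,y\}\cap\{u,v\}\ne\emptyset\}$ (level matchings taken before removals). *)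

From HB Require Import structures.
From mathcomp Require Import all_boot all_order all_algebra.
Set Implicit Arguments. Unset Strict Implicit. Unset Printing Implicit Defensive.
Import Order.TTheory GRing.Theory Num.Theory.
Local Open Scope ring_scope.

Section Defs.
Variables (R : archiRealFieldType) (V E : finType) (src dst : E -> V).
Variables (eps : R) (w : E -> R).

Definition in_bucket (e : E) (b : int) : Prop :=
  eps ^ (- b) <= w e /\ w e < eps ^ (- (b + 1)).

Definition Cpar : nat := `|Num.ceil (eps^-1)|%N.

Definition in_Gc (C c : nat) (e : E) : Prop :=
  exists b : int, in_bucket e b /\ (b %% (C:int))%Z <> (c:int).

Definition on_level (C c : nat) (e : E) (l : int) : Prop :=
  in_Gc C c e /\
  exists b : int, in_bucket e b /\
    (l * C + c + 1 <= b) /\ (b <= (l + 1) * C + c - 1).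

Definition share (e f : E) : bool :=
  [|| src e == src f, src e == dst f, dst e == src f | dst e == dst f].

Definition is_matching (M : {set E}) : Prop :=
  forall e f, e \in M -> f \in M -> e != f -> ~~ share e f.

Definition greedy_step (l : int) (st : {set E} * (int -> {set E})) :
    {set E} * (int -> {set E}) :=
  let: (H, Mc) := st in
  (H :|: Mc l,
   fun l' => if l' < l then [set f in Mc l' | ~~ [exists g in Mc l, share g f]]
             else Mc l').

Fixpoint greedy_from (l : int) (n : nat) (st : {set E} * (int -> {set E})) :=
  match n with
  | 0 => st
  | n'.+1 => greedy_from (l - 1) n' (greedy_step l st)
  end.

(* combined matching \hat M, levels ranging in (hi - n, hi] *)
Definition hatM (M : int -> {set E}) (hi : int) (n : nat) : {set E} :=
  (greedy_from hi n (set0, M)).1.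

(* R(e) for e on level l: e together with the edges of lower-level
   matchings (before removals) sharing an endpoint with e *)
Definition Rset (M : int -> {set E}) (hi : int) (n : nat) (e : E) (l : int)
  : {set E} :=
  [set f | (f == e) || (share e f &&
     [exists k : 'I_n, ((hi - (k:nat)%:Z) < l) && (f \in M (hi - (k:nat)%:Z))])].

Definition Phi M hi n e l : R := \sum_(f in Rset M hi n e l) w f.

End Defs.

From HB Require Import structures.
From mathcomp Require Import all_boot all_order all_algebra.
From mathcomp Require Import ring lra zify.
Import Order.TTheory GRing.Theory Num.Theory.
Local Open Scope ring_scope.

Set Implicit Arguments.
Unset Strict Implicit.
Unset Printing Implicit Defensive.

(* An edge f <> e of R(e) lies in a level matching M_m with m < l. Since the
   bucket congruent to c mod C separates consecutive levels,
   w(f) <= eps (eps^C)^(l-m-1) w(e). Each M_m contains at most two edges meeting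
   e, and eps^C <= eps^2 <= 1/3, so the lower levels contribute at most
   2 eps w(e) (1 + 1/3 + 1/9 + ...) = 3 eps w(e). *)

Lemma ler_wiXz2l (R : realFieldType) (x : R) : 0 < x -> x <= 1 ->
  {homo exprz x : m n /~ m <= n}.
Proof.
move=> x_gt0 x_le1 m n le_nm.
have := @ler_weXz2l _ x^-1 _ (- m) (- n); rewrite !exprz_inv !opprK.
by apply; rewrite ?invf_ge1 ?lerN2.
Qed.

Lemma sum_geom_shift_le (R : realFieldType) (q : R) (n : nat) (d : int) :
  0 <= q -> q <= 1 / 3 ->
  \sum_(k < n | 0 <= k%:Z + d) q ^ (k%:Z + d) <= 3 / 2.
Proof.
move=> q_ge0 q_le13.
(* The bound must shrink as d grows for the induction on n to go through. *)
suff sum_le d' : \sum_(k < n | 0 <= k%:Z + d') q ^ (k%:Z + d')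
                 <= 3 / 2 * (if 0 <= d' then q ^ d' else 1).
  apply: le_trans (sum_le d) _; case: ifP => [d_ge0|_]; last lra.
  case: d d_ge0 {sum_le} => // k _; rewrite -exprnP.
  have : q ^+ k <= 1 by rewrite exprn_ile1 //; lra.
  lra.
elim: n d' => [|n IHn] d'.
  rewrite big_ord0; case: ifP => _; last lra.
  by rewrite mulr_ge0 ?exprz_ge0 //; lra.
rewrite big_mkcond big_ord_recl -big_mkcond /=.
have -> : \sum_(k < n | 0 <= (bump 0 k)%:Z + d') q ^ ((bump 0 k)%:Z + d')
        = \sum_(k < n | 0 <= k%:Z + (d' + 1)) q ^ (k%:Z + (d' + 1)).
  have shift (k : 'I_n) : (bump 0 k)%:Z + d' = k%:Z + (d' + 1).
    by rewrite /bump add1n -addn1 PoszD -addrA (addrC 1).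
  by apply: eq_big => [k|k _]; rewrite shift.
apply: le_trans (lerD (lexx _) (IHn (d' + 1))) _.
have [d_ge0|d_lt0] := lerP 0 d'.
  case: d' d_ge0 => // k _.
  have -> : Posz k + 1 = Posz k.+1 by rewrite -addn1 PoszD.
  rewrite add0r /= -!exprnP exprS.
  have : 0 <= q ^+ k by rewrite exprn_ge0.
  nra.
have [d1_ge0|d1_lt0] := lerP 0 (d' + 1); last by rewrite add0r !ifF; lra.
have -> : d' + 1 = 0 by lia.
by rewrite add0r ifF ?expr0z //; lra.
Qed.

Section Matchings.
Variables (V E : finType) (src dst : E -> V).

Definition touches (v : V) (f : E) : bool := (v == src f) || (v == dst f).

Lemma share_touches (e f : E) :
  share src dst e f = touches (src e) f || touches (dst e) f.
Proof. by rewrite /share /touches !orbA. Qed.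

Lemma matching_touches_eq (A : {set E}) (v : V) (f g : E) :
  is_matching src dst A -> f \in A -> g \in A ->
  touches v f -> touches v g -> f = g.
Proof.
move=> A_match fA gA vf vg; apply/eqP; apply: contraT => /(A_match f g fA gA); rewrite /share.
by case/orP: vf => /eqP <-; case/orP: vg => /eqP <-; rewrite eqxx ?orbT.
Qed.

Lemma card_matching_share_le2 (A : {set E}) (e : E) :
  is_matching src dst A -> (#|[set f in A | share src dst e f]| <= 2)%N.
Proof.
move=> A_match; rewrite -card_bool.
apply: (@leq_card_in _ _ (touches (src e))) => f g.
rewrite !inE !share_touches => /andP[fA ef] /andP[gA eg] /= same_side.
have [sf|sf] := boolP (touches (src e) f).
  by apply: (matching_touches_eq A_match fA gA sf); rewrite -same_side.
have sg : ~~ touches (src e) g by rewrite -same_side.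
by move: ef eg; rewrite (negPf sf) (negPf sg); exact: matching_touches_eq A_match fA gA.
Qed.

End Matchings.

Lemma sum_le_sum_cover (R : numDomainType) (E I : finType) (A : {set E})
    (P : pred I) (B : I -> {set E}) (w : E -> R) :
  (forall f, 0 <= w f) -> (forall f, f \in A -> exists2 i, P i & f \in B i) ->
  \sum_(f in A) w f <= \sum_(i | P i) \sum_(f in B i) w f.
Proof.
move=> w_ge0 A_cover.
rewrite (exchange_big_dep predT) //= [X in _ <= X](bigID [in A]) /=.
rewrite -[X in X <= _]addr0; apply: lerD; last first.
  by apply: sumr_ge0 => f _; apply: sumr_ge0.
apply: ler_sum => f fA; have [i Pi fBi] := A_cover f fA.
by rewrite (bigD1 i) ?Pi ?fBi //= lerDl sumr_ge0.
Qed.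

Section LevelWeights.
Variables (R : archiRealFieldType) (E : finType) (eps : R) (w : E -> R) (C c : nat).
Hypotheses (eps_gt0 : 0 < eps) (eps_le1 : eps <= 1).

Lemma on_level_weight_ge (e : E) (l : int) :
  on_level eps w C c e l -> eps ^ (- (l * C%:Z + c%:Z + 1)) <= w e.
Proof.
case=> _ [b [[b_le _] [lb_b _]]]; apply: le_trans b_le.
by apply: ler_wiXz2l => //; lia.
Qed.

Lemma on_level_weight_le (f : E) (m : int) :
  on_level eps w C c f m -> w f <= eps ^ (- ((m + 1) * C%:Z + c%:Z)).
Proof.
case=> _ [b [[_ lt_b] [_ b_ub]]]; apply: le_trans (ltW lt_b) _.
by apply: ler_wiXz2l => //; lia.
Qed.

Lemma on_level_weight_ratio (e f : E) (l m : int) :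
  on_level eps w C c e l -> on_level eps w C c f m ->
  w f <= eps * (eps ^+ C) ^ (l - m - 1) * w e.
Proof.
move=> el fm; apply: le_trans (on_level_weight_le fm) _.
set a := - ((m + 1) * C%:Z + c%:Z); set b := l * C%:Z + c%:Z + 1.
have -> : eps * (eps ^+ C) ^ (l - m - 1) = eps ^ (a + b).
  have -> : a + b = (l - m - 1) * C%:Z + 1 by rewrite /a /b; ring.
  by rewrite [RHS]expfzDr ?gt_eqF // expr1z [RHS]mulrC exprnP exprz_exp (mulrC C%:Z).
have -> : eps ^ a = eps ^ (a + b) * eps ^ (- b) by rewrite -expfzDr ?gt_eqF ?addrK.
by apply: ler_wpM2l (on_level_weight_ge el); rewrite exprz_ge0 ?ltW.
Qed.

End LevelWeights.

Lemma Cpar_ge2 (R : archiRealFieldType) (eps : R) :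
  0 < eps -> eps < 1 / 2 -> (2 <= Cpar eps)%N.
Proof.
move=> eps_gt0 eps_lt12.
have inv_gt2 : 2 < eps^-1 by rewrite -div1r ltr_pdivlMr //; lra.
have Cpar_ceil : (Cpar eps)%:R = (Num.ceil eps^-1)%:~R :> R.
  by rewrite natr_absz ger0_norm // ceil_ge0; lra.
have : 2%:R < (Cpar eps)%:R :> R by rewrite Cpar_ceil; have := ceil_ge eps^-1; lra.
by rewrite ltr_nat => /ltnW.
Qed.

Lemma expr_Cpar_le (R : archiRealFieldType) (eps : R) :
  0 < eps -> eps < 1 / 2 -> eps ^+ Cpar eps <= 1 / 3.
Proof.
move=> eps_gt0 eps_lt12; have eps_le1 : eps <= 1 by lra.
apply: le_trans (ler_wiXn2l (ltW eps_gt0) eps_le1 (Cpar_ge2 eps_gt0 eps_lt12)) _.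
by rewrite expr2; nra.
Qed.

Section LowerLevels.
Variables (R : archiRealFieldType) (V E : finType) (src dst : E -> V).
Variables (eps : R) (w : E -> R) (C c : nat) (M : int -> {set E}).
Hypotheses (eps_gt0 : 0 < eps) (eps_le1 : eps <= 1) (w_ge0 : forall f, 0 <= w f).
Hypothesis (M_match : forall l, is_matching src dst (M l)).
Hypothesis (M_level : forall l f, f \in M l -> on_level eps w C c f l).

Lemma sum_share_level_le (e : E) (l m : int) : e \in M l ->
  \sum_(f in [set f in M m | share src dst e f]) w f
    <= 2 * (eps * (eps ^+ C) ^ (l - m - 1) * w e).
Proof.
move=> eMl.
have weight_le f : f \in [set f in M m | share src dst e f] ->
    w f <= eps * (eps ^+ C) ^ (l - m - 1) * w e.
  by rewrite inE => /andP[fM _]; apply: on_level_weight_ratio (M_level eMl) (M_level fM).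
apply: le_trans (ler_sum _ weight_le) _; rewrite sumr_const -[_ *+ _]mulr_natl.
apply: ler_wpM2r; first by rewrite !mulr_ge0 ?w_ge0 ?exprz_ge0 ?exprn_ge0 ?ltW.
by rewrite ler_nat card_matching_share_le2.
Qed.

Lemma sum_Rset_lower_le (hi : int) (n : nat) (e : E) (l : int) :
  eps ^+ C <= 1 / 3 -> e \in M l ->
  \sum_(f in Rset src dst M hi n e l :\ e) w f <= 3 * eps * w e.
Proof.
move=> q_le13 eMl; set q := eps ^+ C; set d := l - hi - 1.
pose B (k : 'I_n) := [set f in M (hi - k%:Z) | share src dst e f].
have cover f : f \in Rset src dst M hi n e l :\ e ->
    exists2 k : 'I_n, hi - k%:Z < l & f \in B k.
  rewrite !inE => /andP[/negPf -> /= /andP[ef /existsP[k /andP[lt_k fM]]]].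
  by exists k; rewrite // inE fM ef.
apply: le_trans (sum_le_sum_cover w_ge0 cover) _.
rewrite /B; apply: le_trans (ler_sum _ (fun (k : 'I_n) _ =>
  sum_share_level_le (hi - k%:Z) eMl)) _.
have -> : \sum_(k < n | hi - k%:Z < l) 2 * (eps * q ^ (l - (hi - k%:Z) - 1) * w e)
    = 2 * eps * w e * \sum_(k < n | 0 <= k%:Z + d) q ^ (k%:Z + d).
  rewrite mulr_sumr; apply: eq_big => [k | k _]; first by rewrite /d; lia.
  have -> : l - (hi - k%:Z) - 1 = k%:Z + d by rewrite /d; ring.
  ring.
have := sum_geom_shift_le n d (exprn_ge0 C (ltW eps_gt0)) q_le13.
have : 0 <= 2 * eps * w e by rewrite !mulr_ge0 ?w_ge0 ?ltW.
nra.
Qed.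

End LowerLevels.

Theorem lemma9 (R : archiRealFieldType) (V E : finType) (src dst : E -> V)
  (hloop : forall e, src e != dst e)
  (eps : R) (heps0 : 0 < eps) (heps1 : eps < 1 / 2)
  (w : E -> R) (hw : forall e, 1 <= w e)
  (c : nat) (hc : (c < Cpar eps)%N)
  (M : int -> {set E})
  (hMmatch : forall l, is_matching src dst (M l))
  (hMlevel : forall l f, f \in M l -> on_level eps w (Cpar eps) c f l)
  (hi : int) (n : nat)
  (hrange : forall l, M l != set0 -> hi - n%:Z < l <= hi) :
  forall (e : E) (l : int), e \in hatM src dst M hi n -> e \in M l ->
    Phi src dst w M hi n e l <= (1 + 3 * eps) * w e.
Proof.
move=> e l _ eMl.
have w_ge0 f : 0 <= w f by apply: le_trans (hw f).
have e_in_R : e \in Rset src dst M hi n e l by rewrite inE eqxx.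
rewrite /Phi (big_setD1 e e_in_R) /=.
have eps_le1 : eps <= 1 by lra.
have := sum_Rset_lower_le heps0 eps_le1 w_ge0 hMmatch hMlevel hi n
  (expr_Cpar_le heps0 heps1) eMl.
lra.
Qed.
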